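(* Let $\mathbf{h}_1,\mathbf{h}_2\in\mathbb{C}^M$ be nonzero, $P>0$, and $f(\mathbf{w})=\min\{|\mathbf{h}_1^H\mathbf{w}|^2,|\mathbf{h}_2^H\mathbf{w}|^2\}$. Consider $\max_{\mathbf{w}\in\mathbb{C}^M,\ \mathbf{w}^H\mathbf{w}=P} f(\mathbf{w})$. Scenario 1: if $\mathbf{h}_1=\tau\mathbf{h}_2$ for some $\tau\in\mathbb{C}$, the maximum equals $\min\{P\|\mathbf{h}_1\|^2,P\|\mathbf{h}_2\|^2\}$, attained at $\mathbf{w}=\sqrt{P}\,\mathbf{h}_2/\|\mathbf{h}_2\|$ (equivalently, up to a unit-modulus phase, $\sqrt P\,\mathbf{h}_1/\|\mathbf{h}_1\|$). Scenario 2: if $\mathbf{h}_1,\mathbf{h}_2$ are linearly independent, with $\lambda_1,\lambda_2,\mathbf{V},\theta,\alpha,\beta,\gamma$ as in the context, the maximum is attained at $\mathbf{w}^{\rm opt}=\mathbf{V}\tilde{\mathbf{w}}^{\rm opt}$, where: (1) if $\lambda_1\le\lambda_2$: (a) for $0\le\sin\theta\le\lambda_1/\lambda_2$, the maximum is $\frac{P\lambda_1\lambda_2}{\lambda_1+\lambda_2}\frac{(1+\sin\theta)^2}{\cos^2\theta}$ with $\tilde{\mathbf{w}}^{\rm opt}=[\sqrt{\tfrac{P\lambda_2}{\lambda_1+\lambda_2}}e^{j\beta},\sqrt{\tfrac{P\lambda_1}{\lambda_1+\lambda_2}}e^{j(\beta-\alpha)},0,\dots,0]^T$; (b) for $\lambda_1/\lambda_2<\sin\theta<1$,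 the maximum is $\frac{P(\lambda_1+\lambda_2\sin^2\theta)}{\cos^2\theta}$ with $\tilde{\mathbf{w}}^{\rm opt}=[\sqrt{\tfrac{P\lambda_1}{\lambda_1+\lambda_2\sin^2\theta}}e^{j\beta},\sqrt{\tfrac{P\lambda_2\sin^2\theta}{\lambda_1+\lambda_2\sin^2\theta}}e^{j(\beta-\alpha)},0,\dots,0]^T$; (2) if $\lambda_1>\lambda_2$: (a) for $0\le\sin\theta\le\lambda_2/\lambda_1$, the maximum is $\frac{P\lambda_1\lambda_2}{\lambda_1+\lambda_2}\frac{(1+\sin\theta)^2}{\cos^2\theta}$ with $\tilde{\mathbf{w}}^{\rm opt}=[\sqrt{\tfrac{P\lambda_2}{\lambda_1+\lambda_2}}e^{j(\gamma+\alpha)},\sqrt{\tfrac{P\lambda_1}{\lambda_1+\lambda_2}}e^{j\gamma},0,\dots,0]^T$; (b) for $\lambda_2/\lambda_1<\sin\theta<1$, the maximum is $\frac{P(\lambda_1\sin^2\theta+\lambda_2)}{\cos^2\theta}$ with $\tilde{\mathbf{w}}^{\rm opt}=[\sqrt{\tfrac{P\lambda_1}{\lambda_1+\lambda_2\csc^2\theta}}e^{j(\gamma+\alpha)},\sqrt{\tfrac{P\lambda_2}{\lambda_1\sin^2\theta+\lambda_2}}e^{j\gamma},0,\dots,0]^T$.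
   Context: For linearly independent $\mathbf{h}_1,\mathbf{h}_2\in\mathbb{C}^M$, let $\mathbf{A}=\mathbf{h}_1\mathbf{h}_1^H-\mathbf{h}_2\mathbf{h}_2^H$ (rank 2), with eigendecomposition $\mathbf{A}=\mathbf{V}\boldsymbol{\Sigma}\mathbf{V}^H$, $\mathbf{V}$ unitary, $\boldsymbol{\Sigma}=\mathrm{diag}(\lambda_1,-\lambda_2,0,\dots,0)$, $\lambda_1,\lambda_2>0$. Let $\tilde{\mathbf{h}}_k=\mathbf{V}^H\mathbf{h}_k$, whose entries beyond the second vanish; write $\tilde{\mathbf{h}}_1=[\tilde h_{1,1},\tilde h_{1,2},0,\dots]^T$, $\tilde{\mathbf{h}}_2=[\tilde h_{2,1},\tilde h_{2,2},0,\dots]^T$. Define $\theta=\arccos\frac{\sqrt{\lambda_1}}{|\tilde h_{1,1}|}\in[0,\pi/2)$, $\beta=\arg\tilde h_{1,1}$, $\gamma=\arg\tilde h_{2,2}$, $\alpha=\arg\tilde h_{2,1}-\arg\tilde h_{2,2}$ (arbitrary if $\tilde h_{2,1}=0$). $j=\sqrt{-1}$. *)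

(* Complex numbers are modelled by an arbitrary
   numClosedFieldType C (e.g. algC); all quantities in the theorem are
   algebraic in the data. *)
From HB Require Import structures.
From mathcomp Require Import all_boot all_order all_algebra.
From mathcomp Require Import sesquilinear spectral.
Set Implicit Arguments. Unset Strict Implicit. Unset Printing Implicit Defensive.
Import Order.TTheory GRing.Theory Num.Theory.
Local Open Scope ring_scope.
Local Open Scope sesquilinear_scope.

Section Defs.
Variable C : numClosedFieldType.
Variable M : nat.

Definition inner (x y : 'cV[C]_M) : C := (x ^t* *m y) 0 0.

Definition norm2 (x : 'cV[C]_M) : C := inner x x.

Definition fobj (h1 h2 w : 'cV[C]_M) : C :=
  Num.min (`|inner h1 w| ^+ 2) (`|inner h2 w| ^+ 2).

Definition is_max_at (h1 h2 : 'cV[C]_M) (P : C) (w : 'cV[C]_M) (v : C) : Prop :=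
  [/\ inner w w = P, fobj h1 h2 w = v &
      forall w' : 'cV[C]_M, inner w' w' = P -> fobj h1 h2 w' <= v].

Definition phase (z : C) : C := z / `|z|.

Definition Sigma (i0 i1 : 'I_M) (l1 l2 : C) : 'M[C]_M :=
  diag_mx (\row_i (if i == i0 then l1 else if i == i1 then - l2 else 0)).

Definition vec2 (i0 i1 : 'I_M) (a b : C) : 'cV[C]_M :=
  \col_i (if i == i0 then a else if i == i1 then b else 0).
End Defs.

From HB Require Import structures.
From mathcomp Require Import all_boot all_order all_algebra.
From mathcomp Require Import sesquilinear spectral ring.
Set Implicit Arguments. Unset Strict Implicit. Unset Printing Implicit Defensive.
Import Order.TTheory GRing.Theory Num.Theory.
Local Open Scope ring_scope.
Local Open Scope sesquilinear_scope.

(* After the unitary change of basis [V], both channels live in the first two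
   coordinates, and the entries of [a a^H - b b^H = Sigma] give [|b_0| = s |a_0|]
   and [|a_1| = s |b_1|], where [s = sin theta].  Writing [p = |w_0|] and
   [q = |w_1|], the triangle inequality gives
     [f(w) <= min(|a_0| p + s |b_1| q, s |a_0| p + |b_1| q)^2],
   and the phases [beta], [alpha], [gamma] of the optimal beamformer turn both
   inequalities into equalities.  It remains to maximise the smaller of two
   linear forms on the arc [p^2 + q^2 = P]: either both forms agree at the
   optimum (cases (a)), or one of them lies below the other along the whole
   arc and its Cauchy-Schwarz maximiser wins (cases (b)).  Scenario 1 is the
   Cauchy-Schwarz inequality itself. *)

Section RealBounds.
Variable R : numDomainType.
Implicit Types a b p q x y g X Y P : R.

Lemma min_sqr_witness X Y : 0 <= X -> 0 <= Y ->
  exists g, [/\ 0 <= g, g <= X, g <= Y & Num.min (X ^+ 2) (Y ^+ 2) = g ^+ 2].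
Proof.
move=> X_ge0 Y_ge0; have /orP[XY|YX] := real_leVge (ger0_real X_ge0) (ger0_real Y_ge0).
  by exists X; rewrite min_l // ler_sqr ?nnegrE.
by exists Y; rewrite min_r // ler_sqr ?nnegrE.
Qed.

Lemma le_min2 (x1 x2 y1 y2 : R) : 0 <= x1 -> 0 <= x2 -> x1 <= y1 -> x2 <= y2 ->
  Num.min x1 x2 <= Num.min y1 y2.
Proof.
move=> x1_ge0 x2_ge0 le1 le2.
have y1_real : y1 \is Num.real by rewrite ger0_real // (le_trans x1_ge0).
have y2_real : y2 \is Num.real by rewrite ger0_real // (le_trans x2_ge0).
have [gx1 gx2] : Num.min x1 x2 <= x1 /\ Num.min x1 x2 <= x2.
  have /orP[h|h] := real_leVge (ger0_real x1_ge0) (ger0_real x2_ge0).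
    by rewrite min_l.
  by rewrite min_r.
have /orP[h|h] := real_leVge y1_real y2_real.
  by rewrite (min_l h) (le_trans gx1).
by rewrite (min_r h) (le_trans gx2).
Qed.

Lemma sqr_linear_le a b p q : a \is Num.real -> b \is Num.real ->
  p \is Num.real -> q \is Num.real ->
  (a * p + b * q) ^+ 2 <= (a ^+ 2 + b ^+ 2) * (p ^+ 2 + q ^+ 2).
Proof.
move=> ar br pr qr; rewrite -subr_ge0.
have -> : (a ^+ 2 + b ^+ 2) * (p ^+ 2 + q ^+ 2) - (a * p + b * q) ^+ 2
    = (a * q - b * p) ^+ 2 by ring.
by rewrite real_exprn_even_ge0 // realB // realM.
Qed.

Lemma linear_bound_sqr x y p q g P : 0 <= x -> 0 <= y -> 0 <= p -> 0 <= q ->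
  p ^+ 2 + q ^+ 2 <= P -> 0 <= g -> g <= x * p + y * q ->
  g ^+ 2 <= (x ^+ 2 + y ^+ 2) * P.
Proof.
move=> x_ge0 y_ge0 p_ge0 q_ge0 pqP g_ge0 g_le.
apply: (@le_trans _ _ ((x * p + y * q) ^+ 2)).
  by rewrite ler_sqr ?nnegrE // (le_trans g_ge0).
apply: le_trans (sqr_linear_le (ger0_real x_ge0) (ger0_real y_ge0)
  (ger0_real p_ge0) (ger0_real q_ge0)) _.
by rewrite ler_wpM2l // addr_ge0 ?exprn_ge0.
Qed.

End RealBounds.

(* If both linear forms dominate [g], so does the convex combination of them
   that is proportional to [be * p + al * q]; Cauchy-Schwarz bounds the latter. *)
Lemma balanced_bound_sqr (R : numFieldType) (al be s p q g P : R) :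
  0 < al -> 0 < be -> 0 <= s -> s < 1 ->
  s * al ^+ 2 <= be ^+ 2 -> s * be ^+ 2 <= al ^+ 2 ->
  0 <= p -> 0 <= q -> p ^+ 2 + q ^+ 2 <= P -> 0 <= g ->
  g <= al * p + s * be * q -> g <= s * al * p + be * q ->
  g ^+ 2 <= P * al ^+ 2 * be ^+ 2 * (1 + s) ^+ 2 / (al ^+ 2 + be ^+ 2).
Proof.
move=> al_gt0 be_gt0 s_ge0 s_lt1 le_be le_al p_ge0 q_ge0 pqP g_ge0 g_le1 g_le2.
set D := al ^+ 2 + be ^+ 2.
have D_gt0 : 0 < D by rewrite addr_gt0 // exprn_gt0.
have w1 : 0 <= be ^+ 2 * (1 + s) - s * D.
  by rewrite [X in 0 <= X](_ : _ = be ^+ 2 - s * al ^+ 2) ?subr_ge0 // /D; ring.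
have w2 : 0 <= D - be ^+ 2 * (1 + s).
  by rewrite [X in 0 <= X](_ : _ = al ^+ 2 - s * be ^+ 2) ?subr_ge0 // /D; ring.
have combo : D * g <= (1 + s) * al * be * (be * p + al * q).
  rewrite -(ler_pM2l (_ : 0 < 1 - s)) ?subr_gt0 //.
  have -> : (1 - s) * (D * g) =
      (be ^+ 2 * (1 + s) - s * D) * g + (D - be ^+ 2 * (1 + s)) * g by ring.
  have -> : (1 - s) * ((1 + s) * al * be * (be * p + al * q)) =
      (be ^+ 2 * (1 + s) - s * D) * (al * p + s * be * q) +
      (D - be ^+ 2 * (1 + s)) * (s * al * p + be * q) by rewrite /D; ring.
  by apply: lerD; apply: ler_wpM2l.
have cs : (be * p + al * q) ^+ 2 <= D * P.
  apply: le_trans (sqr_linear_le (gtr0_real be_gt0) (gtr0_real al_gt0)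
    (ger0_real p_ge0) (ger0_real q_ge0)) _.
  by rewrite /D addrC ler_wpM2l // ltW.
rewrite ler_pdivlMr // -(ler_pM2l D_gt0).
have -> : D * (g ^+ 2 * D) = (D * g) ^+ 2 by ring.
have -> : D * (P * al ^+ 2 * be ^+ 2 * (1 + s) ^+ 2) =
    ((1 + s) * al * be) ^+ 2 * (D * P) by ring.
apply: (@le_trans _ _ (((1 + s) * al * be * (be * p + al * q)) ^+ 2)).
  have Dg_ge0 : 0 <= D * g by rewrite mulr_ge0 // ltW.
  by rewrite ler_sqr ?nnegrE // (le_trans Dg_ge0).
by rewrite exprMn ler_wpM2l // exprn_ge0 // !mulr_ge0 ?addr_ge0 // ltW.
Qed.

Section Inner.
Variables (C : numClosedFieldType) (M : nat).
Implicit Types (x y h w u : 'cV[C]_M) (V : 'M[C]_M).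

Lemma innerE x y : inner x y = \sum_i (x i 0)^* * y i 0.
Proof. by rewrite /inner mxE; apply: eq_bigr => i _; rewrite !mxE. Qed.

Lemma inner_dotmx x y : inner x y = dotmx y^T x^T.
Proof. by rewrite dotmxE innerE mxE; apply: eq_bigr => i _; rewrite !mxE mulrC. Qed.

Lemma inner_gt0 x : x != 0 -> 0 < inner x x.
Proof. by rewrite inner_dotmx dnorm_gt0 -(inj_eq trmx_inj) trmx0. Qed.

Lemma inner_CauchySchwarz h w : `|inner h w| ^+ 2 <= inner h h * inner w w.
Proof. by rewrite !inner_dotmx mulrC; case: (CauchySchwarz (@dotmx C M) w^T h^T). Qed.

Lemma innerZl a x y : inner (a *: x) y = a^* * inner x y.
Proof. by rewrite !innerE mulr_sumr; apply: eq_bigr => i _; rewrite mxE rmorphM mulrA. Qed.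

Lemma innerZr a x y : inner x (a *: y) = a * inner x y.
Proof. by rewrite !innerE mulr_sumr; apply: eq_bigr => i _; rewrite mxE mulrCA. Qed.

Lemma inner_mulmxr V h u : inner h (V *m u) = inner (V ^t* *m h) u.
Proof. by rewrite /inner trmx_mul map_mxM trmxCK mulmxA. Qed.

Lemma inner_unitarymx V h w :
  V \is unitarymx -> inner h w = inner (V ^t* *m h) (V ^t* *m w).
Proof. by move=> /unitarymxP VV; rewrite -inner_mulmxr mulmxA VV mul1mx. Qed.

Lemma inner_supp2 (i0 i1 : 'I_M) x y : i0 != i1 ->
  (forall k, k != i0 -> k != i1 -> (x k 0)^* * y k 0 = 0) ->
  inner x y = (x i0 0)^* * y i0 0 + (x i1 0)^* * y i1 0.
Proof.
move=> i01 xy0; rewrite innerE (bigD1 i0) //= (bigD1 i1) 1?eq_sym //=.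
by rewrite big1 ?addr0 // => k /andP[]; exact: xy0.
Qed.

Lemma sumsqr_le_inner (i0 i1 : 'I_M) u : i0 != i1 ->
  `|u i0 0| ^+ 2 + `|u i1 0| ^+ 2 <= inner u u.
Proof.
move=> i01; rewrite innerE (bigD1 i0) //= (bigD1 i1) 1?eq_sym //=.
by rewrite addrA !normCKC lerDl sumr_ge0 // => k _; rewrite -normCKC exprn_ge0.
Qed.

End Inner.

Lemma sqrtC_scale_inner (C : numClosedFieldType) M (x : 'cV[C]_M) (P : C) :
  x != 0 -> 0 < P -> let k := sqrtC P / sqrtC (inner x x) in
  inner (k *: x) (k *: x) = P /\
  forall y, `|inner y (k *: x)| ^+ 2 = P * `|inner y x| ^+ 2 / inner x x.
Proof.
move=> x0 P_gt0 k; have x_gt0 := inner_gt0 x0.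
have k_ge0 : 0 <= k by rewrite divr_ge0 // sqrtC_ge0 ltW.
have k2 : k ^+ 2 = P / inner x x by rewrite expr_div_n !sqrtCK.
split; first by rewrite innerZl innerZr geC0_conj // mulrA -expr2 k2 mulfVK // gt_eqF.
by move=> y; rewrite innerZr normrM exprMn ger0_norm // k2 mulrAC.
Qed.

Lemma collinear_max (C : numClosedFieldType) M (h1 h2 : 'cV[C]_M) (P tau : C) :
  h1 != 0 -> h2 != 0 -> 0 < P -> h1 = tau *: h2 ->
  let vmax := Num.min (P * norm2 h1) (P * norm2 h2) in
  is_max_at h1 h2 P ((sqrtC P / sqrtC (norm2 h2)) *: h2) vmax /\
  is_max_at h1 h2 P ((sqrtC P / sqrtC (norm2 h1)) *: h1) vmax.
Proof.
move=> h1_0 h2_0 P_gt0 h1E vmax; rewrite /vmax /norm2.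
have n1_gt0 := inner_gt0 h1_0; have n2_gt0 := inner_gt0 h2_0.
have n1_0 := gt_eqF n1_gt0; have n2_0 := gt_eqF n2_gt0.
have tau0 : tau != 0 by apply: contra_neq h1_0 => tau0; rewrite h1E tau0 scale0r.
have ntau0 : `|tau| != 0 by rewrite normr_eq0.
have n1E : inner h1 h1 = `|tau| ^+ 2 * inner h2 h2.
  by rewrite h1E innerZl innerZr mulrA normCKC.
have i12 : inner h1 h2 = tau^* * inner h2 h2 by rewrite h1E innerZl.
have i21 : inner h2 h1 = tau * inner h2 h2 by rewrite h1E innerZr.
have ub w : inner w w = P -> fobj h1 h2 w <= Num.min (P * inner h1 h1) (P * inner h2 h2).
  move=> wP; apply: le_min2; rewrite ?exprn_ge0 //.
    by rewrite -wP mulrC inner_CauchySchwarz.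
  by rewrite -wP mulrC inner_CauchySchwarz.
have [nw2 fw2] := sqrtC_scale_inner h2_0 P_gt0.
have [nw1 fw1] := sqrtC_scale_inner h1_0 P_gt0.
split; split => //; rewrite /fobj.
- rewrite !fw2 i12 normrM norm_conjC (ger0_norm (ltW n2_gt0)) n1E.
  by congr Num.min; field; rewrite n2_0.
- rewrite !fw1 i21 normrM (ger0_norm (ltW n1_gt0)) n1E (ger0_norm (ltW n2_gt0)).
  by congr Num.min; field; rewrite n2_0 ntau0.
Qed.

Section Diagonalisation.
Variables (C : numClosedFieldType) (M : nat) (i0 i1 : 'I_M) (l1 l2 : C).
Variables (V : 'M[C]_M) (h1 h2 : 'cV[C]_M).
Hypotheses (i01 : i0 != i1) (V_unitary : V \is unitarymx)
  (h12E : h1 *m h1 ^t* - h2 *m h2 ^t* = V *m Sigma i0 i1 l1 l2 *m V ^t*).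

Local Notation a := (V ^t* *m h1).
Local Notation b := (V ^t* *m h2).

Lemma rotated_gram_diff i j :
  a i 0 * (a j 0)^* - b i 0 * (b j 0)^* =
  (if i == i0 then l1 else if i == i1 then - l2 else 0) *+ (i == j).
Proof.
have VV : V ^t* *m V = 1%:M by apply/mulmx1C/unitarymxP.
transitivity (Sigma i0 i1 l1 l2 i j); last by rewrite !mxE.
have : a *m a ^t* - b *m b ^t* = Sigma i0 i1 l1 l2.
  rewrite !trmx_mul !map_mxM !trmxCK.
  have -> : a *m (h1 ^t* *m V) - b *m (h2 ^t* *m V) =
      V ^t* *m (h1 *m h1 ^t* - h2 *m h2 ^t*) *m V by rewrite mulmxBr mulmxBl !mulmxA.
  by rewrite h12E !mulmxA VV mul1mx -!mulmxA VV mulmx1.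
move/matrixP/(_ i j) => <-.
by rewrite !mxE !big_ord1 !mxE.
Qed.

Lemma rotated_gram00 : a i0 0 * (a i0 0)^* - b i0 0 * (b i0 0)^* = l1.
Proof. by rewrite rotated_gram_diff !eqxx. Qed.

Lemma rotated_gram11 : a i1 0 * (a i1 0)^* - b i1 0 * (b i1 0)^* = - l2.
Proof. by rewrite rotated_gram_diff eq_sym (negbTE i01) !eqxx. Qed.

Lemma rotated_gram10 : a i1 0 * (a i0 0)^* - b i1 0 * (b i0 0)^* = 0.
Proof. by rewrite rotated_gram_diff eq_sym (negbTE i01) mulr0n. Qed.

(* Off the first two coordinates [|a_k| = |b_k|] and [a_k a_0^* = b_k b_0^*];
   a nonzero [a_k] would then force [|a_0| = |b_0|], i.e. [l1 = 0]. *)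
Lemma rotated_support k : 0 < l1 -> k != i0 -> k != i1 -> a k 0 = 0 /\ b k 0 = 0.
Proof.
move=> l1_gt0 k0 k1.
have Ekk := rotated_gram_diff k k; rewrite (negbTE k0) (negbTE k1) mul0rn in Ekk.
have Ek0 := rotated_gram_diff k i0; rewrite (negbTE k0) mulr0n in Ek0.
have E00 := rotated_gram00.
rewrite -!normCK in Ekk E00.
have nk : `|a k 0| = `|b k 0|.
  by apply/eqP; rewrite -(eqrXn2 (n := 2)) // -subr_eq0 Ekk.
have N : `|a k 0| * `|a i0 0| = `|b k 0| * `|b i0 0|.
  move/eqP: Ek0; rewrite subr_eq0 => /eqP/(congr1 Num.norm).
  by rewrite !normrM !norm_conjC.
have ak : a k 0 = 0.
  apply/eqP; apply: contraTT l1_gt0 => ak0.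
  have /mulfI cancel_ak : `|a k 0| != 0 by rewrite normr_eq0.
  by move: N; rewrite -nk => /cancel_ak eq0; rewrite -E00 eq0 subrr ltxx.
by split => //; apply/eqP; rewrite -normr_eq0 -nk ak normr0.
Qed.

End Diagonalisation.

Section Phase.
Variable C : numClosedFieldType.
Implicit Types z e r : C.

Lemma phase_norm z : z != 0 -> `|phase z| = 1.
Proof. by move=> z0; rewrite /phase normrM normfV normr_id mulfV // normr_eq0. Qed.

Lemma phaseE z : z != 0 -> z = `|z| * phase z.
Proof. by move=> z0; rewrite /phase mulrC mulfVK // normr_eq0. Qed.

Lemma conjC_mul_ge0 r z : 0 <= r -> (r * z)^* = r * z^*.
Proof. by move=> r_ge0; rewrite rmorphM /= geC0_conj. Qed.

Lemma norm1_neq0 e : `|e| = 1 -> e != 0.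
Proof. by move=> e1; rewrite -normr_eq0 e1 oner_eq0. Qed.

Lemma norm1_invC e : `|e| = 1 -> e^-1 = e^*.
Proof. by move=> e1; rewrite invC_norm e1 expr1n invr1 mul1r. Qed.

End Phase.

(* [A0, A1] and [B0, B1] stand for the first two coordinates of [V^H h1] and
   [V^H h2], and [s] for [sin theta]. *)
Section TwoCoordinates.
Variables (C : numClosedFieldType) (A0 A1 B0 B1 l1 l2 P ea s : C).
Hypotheses (l1_gt0 : 0 < l1) (l2_gt0 : 0 < l2) (P_gt0 : 0 < P)
  (H00 : A0 * A0^* - B0 * B0^* = l1) (H11 : A1 * A1^* - B1 * B1^* = - l2)
  (H10 : A1 * A0^* - B1 * B0^* = 0)
  (ea_norm : `|ea| = 1) (ea_phase : B0 != 0 -> ea = phase B0 / phase B1)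
  (sE : s = sqrtC (1 - l1 / `|A0| ^+ 2)).

Definition fobj2 (u0 u1 : C) : C :=
  Num.min (`|A0^* * u0 + A1^* * u1| ^+ 2) (`|B0^* * u0 + B1^* * u1| ^+ 2).

Definition is_max2 (X Y v : C) : Prop :=
  [/\ `|X| ^+ 2 + `|Y| ^+ 2 = P, fobj2 X Y = v &
      forall u0 u1, `|u0| ^+ 2 + `|u1| ^+ 2 <= P -> fobj2 u0 u1 <= v].

Local Notation al := `|A0|.
Local Notation be := `|B1|.

Lemma normA0_gt0 : 0 < al.
Proof.
rewrite normr_gt0; apply: contraTneq l1_gt0 => A0_0.
by rewrite -H00 A0_0 mul0r sub0r oppr_gt0 -normCK le_gtF // exprn_ge0.
Qed.

Lemma sinE : s = `|B0| / al.
Proof.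
have al_neq0 := gt_eqF normA0_gt0.
rewrite sE -H00 -!normCK.
have -> : 1 - (al ^+ 2 - `|B0| ^+ 2) / al ^+ 2 = (`|B0| / al) ^+ 2.
  by field; rewrite al_neq0.
by rewrite sqrCK // divr_ge0.
Qed.

Lemma sin_ge0 : 0 <= s.
Proof. by rewrite sinE divr_ge0. Qed.

Lemma normB0E : `|B0| = s * al.
Proof. by rewrite sinE mulfVK // gt_eqF // normA0_gt0. Qed.

Lemma norm_cross : `|A1| * al = be * `|B0|.
Proof.
move/eqP: H10; rewrite subr_eq0 => /eqP/(congr1 Num.norm).
by rewrite !normrM !norm_conjC.
Qed.

Lemma normA1E : `|A1| = s * be.
Proof.
apply: (mulIf (lt0r_neq0 normA0_gt0)); rewrite norm_cross normB0E /=.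
by rewrite mulrCA mulrA.
Qed.

Lemma l1E : l1 = al ^+ 2 * (1 - s ^+ 2).
Proof. by rewrite -H00 -!normCK normB0E; ring. Qed.

Lemma l2E : l2 = be ^+ 2 * (1 - s ^+ 2).
Proof. by apply: oppr_inj; rewrite -H11 -!normCK normA1E; ring. Qed.

Lemma cos2_gt0 : 0 < 1 - s ^+ 2.
Proof. by move: l1_gt0; rewrite l1E pmulr_rgt0 // exprn_gt0 // normA0_gt0. Qed.

Lemma cos2E : 1 - s ^+ 2 = l1 / al ^+ 2.
Proof. by rewrite l1E mulrC mulKf // expf_neq0 // gt_eqF // normA0_gt0. Qed.

Lemma normB1_gt0 : 0 < be.
Proof.
rewrite normr_gt0; apply: contraTneq l2_gt0 => B1_0.
by rewrite l2E B1_0 normr0 expr0n /= mul0r ltxx.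
Qed.

Lemma sin_lt1 : s < 1.
Proof.
have := cos2_gt0; rewrite subr_gt0 -[X in _ < X](expr1n _ 2).
by rewrite ltr_sqr ?nnegrE ?sin_ge0.
Qed.

Lemma A0_neq0 : A0 != 0.
Proof. by rewrite -normr_gt0 normA0_gt0. Qed.

Lemma B1_neq0 : B1 != 0.
Proof. by rewrite -normr_gt0 normB1_gt0. Qed.

(* [ea] is the relative phase [e^{j alpha}] of [B0] and [B1]; by [H10] it is
   also that of [A0] and [A1] (when these do not vanish). *)
Lemma phase_align : A1 * ea = `|A1| * phase A0 /\ B0 = `|B0| * phase B1 * ea.
Proof.
have A1A0 : A1 * A0^* = B1 * B0^* by apply/eqP; rewrite -subr_eq0 H10.
have nA0 : al != 0 by rewrite normr_eq0 A0_neq0.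
have nB1 : be != 0 by rewrite normr_eq0 B1_neq0.
have [B0_0|B0_neq0] := eqVneq B0 0.
  have -> : A1 = 0.
    move/eqP: A1A0; rewrite B0_0 conjC0 mulr0 mulf_eq0 conjC_eq0.
    by rewrite (negbTE A0_neq0) orbF => /eqP.
  by rewrite B0_0 normr0 !mul0r.
have nB0 : `|B0| != 0 by rewrite normr_eq0.
rewrite (ea_phase B0_neq0) /phase; split; last by field; rewrite B1_neq0 nB0 nB1.
have -> : A1 = B1 * B0^* / A0^* by rewrite -A1A0 mulfK // conjC_eq0 A0_neq0.
have -> : `|B1 * B0^* / A0^*| = be * `|B0| / al by rewrite normrM normfV !normrM !norm_conjC.
have conjA0 : A0^* = al ^+ 2 / A0 by rewrite normCK; field; exact: A0_neq0.
have conjB0 : B0^* = `|B0| ^+ 2 / B0 by rewrite normCK; field.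
by rewrite conjA0 conjB0; field; rewrite A0_neq0 B0_neq0 B1_neq0 nA0 nB0 nB1.
Qed.

Lemma aligned_norms w0 x y : `|w0| = 1 -> 0 <= x -> 0 <= y ->
  `|A0^* * (x * w0) + A1^* * (y * (w0 / ea))| = al * x + s * be * y /\
  `|B0^* * (x * w0) + B1^* * (y * (w0 / ea))| = s * al * x + be * y.
Proof.
move=> w0_1 x_ge0 y_ge0; have [A1E B0E] := phase_align.
have ea_inv := norm1_invC ea_norm; have ea_neq0 := norm1_neq0 ea_norm.
have cA0 : A0^* = al * (phase A0)^* by rewrite {1}(phaseE A0_neq0) conjC_mul_ge0.
have cA1 : A1^* = `|A1| * (phase A0)^* * ea.
  have A1E' : A1 = `|A1| * phase A0 * ea^* by rewrite -A1E -ea_inv mulfK.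
  by rewrite {1}A1E' -mulrA conjC_mul_ge0 // rmorphM /= conjCK mulrA.
have cB1 : B1^* = be * (phase B1)^* by rewrite {1}(phaseE B1_neq0) conjC_mul_ge0.
have cB0 : B0^* = `|B0| * (phase B1)^* * ea^*.
  by rewrite {1}B0E -mulrA conjC_mul_ge0 // rmorphM /= mulrA.
rewrite -normA1E -normB0E; split.
  rewrite cA0 cA1.
  have -> : al * (phase A0)^* * (x * w0) + `|A1| * (phase A0)^* * ea * (y * (w0 / ea)) =
      ((phase A0)^* * w0) * (al * x + `|A1| * y) by field.
  rewrite !normrM norm_conjC phase_norm ?A0_neq0 // w0_1 !mul1r.
  by rewrite ger0_norm // addr_ge0 // mulr_ge0.
rewrite cB0 cB1 -ea_inv.
have -> : `|B0| * (phase B1)^* * ea^-1 * (x * w0) + be * (phase B1)^* * (y * (w0 / ea)) =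
    ((phase B1)^* * w0 * ea^-1) * (`|B0| * x + be * y) by field.
rewrite !normrM norm_conjC phase_norm ?B1_neq0 // w0_1 normfV ea_norm invr1 !mul1r.
by rewrite ger0_norm // addr_ge0 // mulr_ge0.
Qed.

Lemma fobj2_le u0 u1 : exists g, [/\ 0 <= g, g <= al * `|u0| + s * be * `|u1|,
  g <= s * al * `|u0| + be * `|u1| & fobj2 u0 u1 = g ^+ 2].
Proof.
rewrite /fobj2; have [g [g_ge0 g_le1 g_le2 ->]] :=
  min_sqr_witness (normr_ge0 (A0^* * u0 + A1^* * u1)) (normr_ge0 (B0^* * u0 + B1^* * u1)).
exists g; split => //.
  apply: le_trans g_le1 (le_trans (ler_normD _ _) _).
  by rewrite !normrM !norm_conjC normA1E.
apply: le_trans g_le2 (le_trans (ler_normD _ _) _).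
by rewrite !normrM !norm_conjC normB0E.
Qed.

Lemma is_max2_witness w0 x y v : `|w0| = 1 -> 0 <= x -> 0 <= y ->
  x ^+ 2 + y ^+ 2 = P ->
  Num.min ((al * x + s * be * y) ^+ 2) ((s * al * x + be * y) ^+ 2) = v ->
  (forall p q g, 0 <= p -> 0 <= q -> p ^+ 2 + q ^+ 2 <= P -> 0 <= g ->
     g <= al * p + s * be * q -> g <= s * al * p + be * q -> g ^+ 2 <= v) ->
  is_max2 (x * w0) (y * (w0 / ea)) v.
Proof.
move=> w0_1 x_ge0 y_ge0 xyP xyv bound; split.
- by rewrite !normrM w0_1 normfV ea_norm invr1 !mulr1 !ger0_norm.
- by rewrite /fobj2; have [-> ->] := aligned_norms w0_1 x_ge0 y_ge0.
move=> u0 u1 uP; have [g [g_ge0 g_le1 g_le2 ->]] := fobj2_le u0 u1.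
exact: bound (normr_ge0 _) (normr_ge0 _) uP g_ge0 g_le1 g_le2.
Qed.

Lemma is_max2_balanced w0 : `|w0| = 1 -> s * l1 <= l2 -> s * l2 <= l1 ->
  is_max2 (sqrtC (P * l2 / (l1 + l2)) * w0) (sqrtC (P * l1 / (l1 + l2)) * (w0 / ea))
    (P * l1 * l2 / (l1 + l2) * ((1 + s) ^+ 2 / (l1 / al ^+ 2))).
Proof.
move=> w0_1; have al_gt0 := normA0_gt0; have be_gt0 := normB1_gt0.
have c_gt0 := cos2_gt0; rewrite -cos2E l1E l2E.
set c := 1 - s ^+ 2; set D := al ^+ 2 + be ^+ 2.
move=> le12 le21.
have le_be : s * al ^+ 2 <= be ^+ 2 by rewrite -(ler_pM2r c_gt0) -mulrA.
have le_al : s * be ^+ 2 <= al ^+ 2 by rewrite -(ler_pM2r c_gt0) -mulrA.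
have D_gt0 : 0 < D by rewrite addr_gt0 // exprn_gt0.
have [c_neq0 D_neq0] := (lt0r_neq0 c_gt0, lt0r_neq0 D_gt0).
have sumE : al ^+ 2 * c + be ^+ 2 * c = D * c by rewrite mulrDl.
set r := sqrtC (P / D).
have r_ge0 : 0 <= r by rewrite sqrtC_ge0 divr_ge0 // ltW.
have r2 : r ^+ 2 = P / D by rewrite sqrtCK.
have -> : sqrtC (P * (be ^+ 2 * c) / (al ^+ 2 * c + be ^+ 2 * c)) = be * r.
  rewrite sumE (_ : P * (be ^+ 2 * c) / (D * c) = (be * r) ^+ 2).
    by rewrite sqrCK // mulr_ge0 // ltW.
  by rewrite exprMn r2; field; rewrite c_neq0 D_neq0.
have -> : sqrtC (P * (al ^+ 2 * c) / (al ^+ 2 * c + be ^+ 2 * c)) = al * r.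
  rewrite sumE (_ : P * (al ^+ 2 * c) / (D * c) = (al * r) ^+ 2).
    by rewrite sqrCK // mulr_ge0 // ltW.
  by rewrite exprMn r2; field; rewrite c_neq0 D_neq0.
(* at [x = be * r], [y = al * r] both linear forms equal [(1 + s) * al * be * r] *)
apply: is_max2_witness; rewrite ?mulr_ge0 ?(ltW al_gt0) ?(ltW be_gt0) //.
- by rewrite !exprMn r2 -mulrDl addrC mulrC divfK.
- have -> : al * (be * r) + s * be * (al * r) = (1 + s) * al * be * r by ring.
  have -> : s * al * (be * r) + be * (al * r) = (1 + s) * al * be * r by ring.
  by rewrite minxx sumE !exprMn r2; field; rewrite c_neq0 D_neq0.
move=> p q g p_ge0 q_ge0 pqP g_ge0 g_le1 g_le2.
have -> : P * (al ^+ 2 * c) * (be ^+ 2 * c) / (al ^+ 2 * c + be ^+ 2 * c) *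
    ((1 + s) ^+ 2 / c) = P * al ^+ 2 * be ^+ 2 * (1 + s) ^+ 2 / D.
  by rewrite sumE; field; rewrite c_neq0 D_neq0.
exact: balanced_bound_sqr al_gt0 be_gt0 sin_ge0 sin_lt1 le_be le_al
  p_ge0 q_ge0 pqP g_ge0 g_le1 g_le2.
Qed.

(* Here the second form dominates the first along the whole arc, so the
   optimum is the Cauchy-Schwarz maximiser of the first form alone. *)
Lemma is_max2_first w0 : `|w0| = 1 -> l1 < s * l2 ->
  is_max2 (sqrtC (P * l1 / (l1 + l2 * s ^+ 2)) * w0)
    (sqrtC (P * l2 * s ^+ 2 / (l1 + l2 * s ^+ 2)) * (w0 / ea))
    (P * (l1 + l2 * s ^+ 2) / (l1 / al ^+ 2)).
Proof.
move=> w0_1; have al_gt0 := normA0_gt0; have be_gt0 := normB1_gt0.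
have al_ge0 := ltW al_gt0; have be_ge0 := ltW be_gt0; have s_ge0 := sin_ge0.
have c_gt0 := cos2_gt0; rewrite -cos2E l1E l2E.
set c := 1 - s ^+ 2; set E := al ^+ 2 + s ^+ 2 * be ^+ 2 => lt12.
have lt_be : al ^+ 2 < s * be ^+ 2 by rewrite -(ltr_pM2r c_gt0) -[s * _ * c]mulrA.
have E_gt0 : 0 < E by rewrite /E; apply: ltr_wpDr; rewrite ?mulr_ge0 ?exprn_ge0 ?exprn_gt0.
have [c_neq0 E_neq0] := (lt0r_neq0 c_gt0, lt0r_neq0 E_gt0).
have sumE : al ^+ 2 * c + be ^+ 2 * c * s ^+ 2 = c * E by rewrite /E; ring.
set r := sqrtC (P / E).
have r_ge0 : 0 <= r by rewrite sqrtC_ge0 divr_ge0 // ltW.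
have r2 : r ^+ 2 = P / E by rewrite sqrtCK.
rewrite sumE (_ : P * (al ^+ 2 * c) / (c * E) = (al * r) ^+ 2); last first.
  by rewrite exprMn r2; field; rewrite c_neq0 E_neq0.
rewrite (_ : P * (be ^+ 2 * c) * s ^+ 2 / (c * E) = (s * be * r) ^+ 2); last first.
  by rewrite !exprMn r2; field; rewrite c_neq0 E_neq0.
rewrite !sqrCK ?mulr_ge0 //.
have form1 : al * (al * r) + s * be * (s * be * r) = E * r by rewrite /E; ring.
have form2 : s * al * (al * r) + be * (s * be * r) = s * (al ^+ 2 + be ^+ 2) * r by ring.
apply: is_max2_witness; rewrite ?mulr_ge0 //.
- by rewrite !exprMn r2 -mulrDl -/E mulrC divfK.
- rewrite form1 form2 min_l; first by rewrite exprMn r2; field; rewrite c_neq0 E_neq0.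
  rewrite ler_sqr ?nnegrE ?mulr_ge0 ?(ltW E_gt0) ?addr_ge0 ?exprn_ge0 //.
  rewrite ler_wpM2r // -subr_ge0.
  have -> : s * (al ^+ 2 + be ^+ 2) - E = (1 - s) * (s * be ^+ 2 - al ^+ 2) by rewrite /E; ring.
  by rewrite mulr_ge0 // subr_ge0 ltW // sin_lt1.
move=> p q g p_ge0 q_ge0 pqP g_ge0 g_le1 _.
rewrite (_ : P * (c * E) / c = (al ^+ 2 + (s * be) ^+ 2) * P); last first.
  by rewrite exprMn /E; field.
exact: linear_bound_sqr al_ge0 (mulr_ge0 s_ge0 be_ge0) p_ge0 q_ge0 pqP g_ge0 g_le1.
Qed.

Lemma is_max2_second w0 : `|w0| = 1 -> l2 < s * l1 ->
  is_max2 (sqrtC (P * l1 / (l1 + l2 / s ^+ 2)) * w0)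
    (sqrtC (P * l2 / (l1 * s ^+ 2 + l2)) * (w0 / ea))
    (P * (l1 * s ^+ 2 + l2) / (l1 / al ^+ 2)).
Proof.
move=> w0_1; have al_gt0 := normA0_gt0; have be_gt0 := normB1_gt0.
have al_ge0 := ltW al_gt0; have be_ge0 := ltW be_gt0; have s_ge0 := sin_ge0.
have c_gt0 := cos2_gt0; rewrite -cos2E l1E l2E.
set c := 1 - s ^+ 2; set E := s ^+ 2 * al ^+ 2 + be ^+ 2 => lt21.
have lt_al : be ^+ 2 < s * al ^+ 2 by rewrite -(ltr_pM2r c_gt0) -[s * _ * c]mulrA.
have s_neq0 : s != 0.
  by apply: contraTneq lt_al => ->; rewrite mul0r le_gtF // exprn_ge0.
have E_gt0 : 0 < E by rewrite /E; apply: ltr_wpDl; rewrite ?mulr_ge0 ?exprn_ge0 ?exprn_gt0.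
have [c_neq0 E_neq0] := (lt0r_neq0 c_gt0, lt0r_neq0 E_gt0).
have sumE1 : al ^+ 2 * c + be ^+ 2 * c / s ^+ 2 = c * E / s ^+ 2.
  by rewrite /E; field; rewrite s_neq0.
have sumE2 : al ^+ 2 * c * s ^+ 2 + be ^+ 2 * c = c * E by rewrite /E; ring.
set r := sqrtC (P / E).
have r_ge0 : 0 <= r by rewrite sqrtC_ge0 divr_ge0 // ltW.
have r2 : r ^+ 2 = P / E by rewrite sqrtCK.
rewrite sumE1 sumE2 (_ : P * (al ^+ 2 * c) / (c * E / s ^+ 2) = (s * al * r) ^+ 2); last first.
  by rewrite !exprMn r2; field; rewrite c_neq0 E_neq0 s_neq0.
rewrite (_ : P * (be ^+ 2 * c) / (c * E) = (be * r) ^+ 2); last first.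
  by rewrite exprMn r2; field; rewrite c_neq0 E_neq0.
rewrite !sqrCK ?mulr_ge0 //.
have form1 : al * (s * al * r) + s * be * (be * r) = s * (al ^+ 2 + be ^+ 2) * r by ring.
have form2 : s * al * (s * al * r) + be * (be * r) = E * r by rewrite /E; ring.
apply: is_max2_witness; rewrite ?mulr_ge0 //.
- by rewrite !exprMn r2 -mulrDl -/E mulrC divfK.
- rewrite form1 form2 min_r; first by rewrite exprMn r2; field; rewrite c_neq0 E_neq0.
  rewrite ler_sqr ?nnegrE ?mulr_ge0 ?(ltW E_gt0) ?addr_ge0 ?exprn_ge0 //.
  rewrite ler_wpM2r // -subr_ge0.
  have -> : s * (al ^+ 2 + be ^+ 2) - E = (1 - s) * (s * al ^+ 2 - be ^+ 2) by rewrite /E; ring.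
  by rewrite mulr_ge0 // subr_ge0 ltW // sin_lt1.
move=> p q g p_ge0 q_ge0 pqP g_ge0 _ g_le2.
rewrite (_ : P * (c * E) / c = ((s * al) ^+ 2 + be ^+ 2) * P); last first.
  by rewrite exprMn /E; field.
exact: linear_bound_sqr (mulr_ge0 s_ge0 al_ge0) be_ge0 p_ge0 q_ge0 pqP g_ge0 g_le2.
Qed.

End TwoCoordinates.

Lemma is_max_at_rotated (C : numClosedFieldType) M (h1 h2 : 'cV[C]_M) (V : 'M[C]_M)
    (l1 l2 P : C) (i0 i1 : 'I_M) :
  i0 != i1 -> V \is unitarymx -> 0 < l1 ->
  h1 *m h1 ^t* - h2 *m h2 ^t* = V *m Sigma i0 i1 l1 l2 *m V ^t* ->
  let a := V ^t* *m h1 in let b := V ^t* *m h2 in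
  forall X Y v, is_max2 (a i0 0) (a i1 0) (b i0 0) (b i1 0) P X Y v ->
  is_max_at h1 h2 P (V *m vec2 i0 i1 X Y) v.
Proof.
move=> i01 V_unitary l1_gt0 h12E a b X Y v [XYP fXY le_v].
have [a_supp b_supp] : (forall k, k != i0 -> k != i1 -> a k 0 = 0) /\
                       (forall k, k != i0 -> k != i1 -> b k 0 = 0).
  by split=> k k0 k1; case: (rotated_support V_unitary h12E l1_gt0 k0 k1).
have supp_inner (x u : 'cV[C]_M) : (forall k, k != i0 -> k != i1 -> x k 0 = 0) ->
    inner x u = (x i0 0)^* * u i0 0 + (x i1 0)^* * u i1 0.
  by move=> x0; apply: inner_supp2 => // k k0 k1; rewrite x0 // conjC0 mul0r.
have vec2_0 : vec2 i0 i1 X Y i0 0 = X by rewrite mxE eqxx.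
have vec2_1 : vec2 i0 i1 X Y i1 0 = Y by rewrite mxE eq_sym (negbTE i01) eqxx.
split.
- rewrite inner_mulmxr mulmxA (mulmx1C (unitarymxP V_unitary)) mul1mx.
  rewrite (inner_supp2 i01) => [|k k0 k1]; last by rewrite mxE (negbTE k0) (negbTE k1) mulr0.
  by rewrite vec2_0 vec2_1 -!normCKC.
- by rewrite /fobj !inner_mulmxr -/a -/b !supp_inner // vec2_0 vec2_1.
move=> w wP; rewrite /fobj (inner_unitarymx h1 w V_unitary) (inner_unitarymx h2 w V_unitary).
rewrite -/a -/b !supp_inner //; apply: le_v.
by rewrite -wP (inner_unitarymx w w V_unitary) sumsqr_le_inner.
Qed.

Theorem theorem3 (C : numClosedFieldType) (M : nat) (h1 h2 : 'cV[C]_M) (P : C) :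
  h1 != 0 -> h2 != 0 -> 0 < P ->
  (forall tau : C, h1 = tau *: h2 ->
     let vmax := Num.min (P * norm2 h1) (P * norm2 h2) in
     is_max_at h1 h2 P ((sqrtC P / sqrtC (norm2 h2)) *: h2) vmax /\
     is_max_at h1 h2 P ((sqrtC P / sqrtC (norm2 h1)) *: h1) vmax)
  /\
  (forall (V : 'M[C]_M) (l1 l2 : C) (i0 i1 : 'I_M) (ea : C),
     free [:: h1; h2] ->
     val i0 = 0%N -> val i1 = 1%N ->
     V \is unitarymx ->
     0 < l1 -> 0 < l2 ->
     h1 *m h1 ^t* - h2 *m h2 ^t* = V *m Sigma i0 i1 l1 l2 *m V ^t* ->
     let ht1 := V ^t* *m h1 in
     let ht2 := V ^t* *m h2 in
     (* e^{j alpha}, alpha = arg ht2_1 - arg ht2_2, arbitrary if ht2_1 = 0 *)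
     `|ea| = 1 ->
     (ht2 i0 0 != 0 -> ea = phase (ht2 i0 0) / phase (ht2 i1 0)) ->
     let eb := phase (ht1 i0 0) in            (* e^{j beta}  *)
     let eg := phase (ht2 i1 0) in            (* e^{j gamma} *)
     let c2 := l1 / `|ht1 i0 0| ^+ 2 in        (* cos^2 theta *)
     let s := sqrtC (1 - c2) in             (* sin theta   *)
     (l1 <= l2 ->
        (0 <= s <= l1 / l2 ->
           is_max_at h1 h2 P
             (V *m vec2 i0 i1 (sqrtC (P * l2 / (l1 + l2)) * eb)
                              (sqrtC (P * l1 / (l1 + l2)) * (eb / ea)))
             (P * l1 * l2 / (l1 + l2) * ((1 + s) ^+ 2 / c2)))
        /\
        (l1 / l2 < s < 1 ->
           is_max_at h1 h2 P
             (V *m vec2 i0 i1 (sqrtC (P * l1 / (l1 + l2 * s ^+ 2)) * eb)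
                              (sqrtC (P * l2 * s ^+ 2 / (l1 + l2 * s ^+ 2)) * (eb / ea)))
             (P * (l1 + l2 * s ^+ 2) / c2)))
     /\
     (l2 < l1 ->
        (0 <= s <= l2 / l1 ->
           is_max_at h1 h2 P
             (V *m vec2 i0 i1 (sqrtC (P * l2 / (l1 + l2)) * (eg * ea))
                              (sqrtC (P * l1 / (l1 + l2)) * eg))
             (P * l1 * l2 / (l1 + l2) * ((1 + s) ^+ 2 / c2)))
        /\
        (l2 / l1 < s < 1 ->
           is_max_at h1 h2 P
             (V *m vec2 i0 i1 (sqrtC (P * l1 / (l1 + l2 / s ^+ 2)) * (eg * ea))
                              (sqrtC (P * l2 / (l1 * s ^+ 2 + l2)) * eg))
             (P * (l1 * s ^+ 2 + l2) / c2)))).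
Proof.
move=> h1_0 h2_0 P_gt0; split=> [tau|]; first exact: collinear_max.
move=> V l1 l2 i0 i1 ea _ i0E i1E V_unitary l1_gt0 l2_gt0 h12E ht1 ht2 ea_norm ea_phase.
move=> eb eg c2 s.
have i01 : i0 != i1 by rewrite -val_eqE i0E i1E.
have G00 := rotated_gram00 V_unitary h12E.
have G11 := rotated_gram11 i01 V_unitary h12E.
have G10 := rotated_gram10 i01 V_unitary h12E.
have balanced := is_max2_balanced l1_gt0 l2_gt0 P_gt0 G00 G11 G10 ea_norm ea_phase (erefl s).
have first := is_max2_first l1_gt0 l2_gt0 P_gt0 G00 G11 G10 ea_norm ea_phase (erefl s).
have second := is_max2_second l1_gt0 l2_gt0 P_gt0 G00 G11 G10 ea_norm ea_phase (erefl s).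
have s_lt1 : s < 1 := sin_lt1 l1_gt0 G00 (erefl s).
have eb_norm : `|eb| = 1 := phase_norm (A0_neq0 l1_gt0 G00).
have egea_norm : `|eg * ea| = 1.
  rewrite normrM ea_norm mulr1.
  exact: phase_norm (B1_neq0 l1_gt0 l2_gt0 G00 G11 G10 (erefl s)).
have egeaK : eg * ea / ea = eg by rewrite mulfK // norm1_neq0.
split=> lt12; split=> /andP[s_lb s_ub];
  apply: (is_max_at_rotated i01 V_unitary l1_gt0 h12E).
- apply: balanced eb_norm _ _; last by rewrite -ler_pdivlMr.
  by apply: le_trans lt12; rewrite ler_piMl // ltW.
- by apply: first eb_norm _; rewrite -ltr_pdivrMr.
- have := balanced _ egea_norm; rewrite egeaK; apply; first by rewrite -ler_pdivlMr.
  by apply: le_trans (ltW lt12); rewrite ler_piMl // ltW.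
- by have := second _ egea_norm; rewrite egeaK; apply; rewrite -ltr_pdivrMr.
Qed.
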